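(* Assume that MSCQ holds for the system $G(z)\in K$ at $\bar z$, and let $v\in Z$ satisfy $\nabla G(\bar z)v\in K$. Then there is $\kappa>0$ with the following property. For every pair $(w,q)\in Z\times E$ with $$\nabla G(\bar z)w+\tfrac12\nabla^2G(\bar z)(v,v)+q\in T_K(\nabla G(\bar z)v)$$ there exists $\widetilde w\in Z$ such that $$\nabla G(\bar z)\widetilde w+\tfrac12\nabla^2G(\bar z)(v,v)\in T_K(\nabla G(\bar z)v)\quad\text{and}\quad \|\widetilde w-w\|\le\kappa\|q\|.$$ Equivalently, the mapping $\Theta\colon E\rightrightarrows Z$ defined by $\Theta(q):=\{w:\nabla G(\bar z)w+\frac12\nabla^2G(\bar z)(v,v)+q\in T_K(\nabla G(\bar z)v)\}$ satisfies $\Theta(q)\subset\Theta(0)+\kappa\|q\|{\cal B}_Z$ for all $q\in E$.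
   Context: Setting: $Z$ and $E$ are finite-dimensional spaces, $\bar z\in Z$, and $K\subset E$ is a closed convex cone. The map $G\colon Z\to E$ is $C^2$-smooth around $\bar z$ with $G(\bar z)=0$. (In the paper $Z=P\times X$ and $G=h\circ g$ is the reduction mapping of a $C^2$-cone reducible constraint system.) $\nabla^2G(\bar z)(v,v)$ is the second derivative of $G$ at $\bar z$ evaluated at $(v,v)$. For a closed set $\Omega$ and $\bar y\in\Omega$, the tangent cone is $T_\Omega(\bar y):=\{w:\exists\, t_k\downarrow0,\ w_k\to w \text{ with } \bar y+t_kw_k\in\Omega\}$. The system $G(z)\in K$ satisfies MSCQ at $\bar z$ if there is $\kappa'\ge0$ such that ${\rm dist}(z;G^{-1}(K))\le\kappa'\,{\rm dist}(G(z);K)$ for all $z$ near $\bar z$. ${\cal B}_Z$ is the closed unit ball. *)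

(* classical reals. Z = R^n, E = R^m in coordinates. *)
From Stdlib Require Import Reals Lra.
From Stdlib Require Vectors.Fin.
Open Scope R_scope.

Definition Vec (n : nat) : Type := Fin.t n -> R.

Fixpoint fsum (n : nat) : (Fin.t n -> R) -> R :=
  match n return (Fin.t n -> R) -> R with
  | O => fun _ => 0
  | S k => fun f => f Fin.F1 + fsum k (fun i => f (Fin.FS i))
  end.

Definition vzero (n : nat) : Vec n := fun _ => 0.
Definition vadd {n : nat} (x y : Vec n) : Vec n := fun i => x i + y i.
Definition vopp {n : nat} (x : Vec n) : Vec n := fun i => - x i.
Definition vsub {n : nat} (x y : Vec n) : Vec n := fun i => x i - y i.
Definition vscal {n : nat} (a : R) (x : Vec n) : Vec n := fun i => a * x i.

Definition vnorm {n : nat} (x : Vec n) : R := sqrt (fsum n (fun i => x i * x i)).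

Definition is_glb (S : R -> Prop) (d : R) : Prop :=
  (forall r, S r -> d <= r) /\ (forall b, (forall r, S r -> b <= r) -> b <= d).

Definition is_dist {n : nat} (S : Vec n -> Prop) (x : Vec n) (d : R) : Prop :=
  is_glb (fun r => exists s, S s /\ r = vnorm (vsub x s)) d.

Definition closed_set {n : nat} (S : Vec n -> Prop) : Prop :=
  forall x, (forall eps, 0 < eps -> exists y, S y /\ vnorm (vsub x y) < eps) -> S x.
Definition convex_set {n : nat} (S : Vec n -> Prop) : Prop :=
  forall x y t, S x -> S y -> 0 <= t <= 1 ->
    S (vadd (vscal t x) (vscal (1 - t) y)).
Definition cone_set {n : nat} (S : Vec n -> Prop) : Prop :=
  forall x t, S x -> 0 <= t -> S (vscal t x).
Definition closed_convex_cone {n : nat} (S : Vec n -> Prop) : Prop :=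
  closed_set S /\ convex_set S /\ cone_set S.

Definition tangent_cone {n : nat} (Om : Vec n -> Prop) (ybar w : Vec n) : Prop :=
  exists (t : nat -> R) (wk : nat -> Vec n),
    (forall k, 0 < t k) /\ Un_cv t 0 /\
    (forall eps, 0 < eps -> exists N, forall k, (k >= N)%nat -> vnorm (vsub (wk k) w) < eps) /\
    (forall k, Om (vadd ybar (vscal (t k) (wk k)))).

Definition is_linear {n m : nat} (A : Vec n -> Vec m) : Prop :=
  forall x y a b, A (vadd (vscal a x) (vscal b y)) = vadd (vscal a (A x)) (vscal b (A y)).
Definition is_bilinear {n m : nat} (B : Vec n -> Vec n -> Vec m) : Prop :=
  (forall u, is_linear (fun h => B h u)) /\ (forall h, is_linear (B h)).

Definition frechet_deriv {n m : nat} (f : Vec n -> Vec m) (A : Vec n -> Vec m) (x : Vec n) : Prop :=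
  is_linear A /\
  forall eps, 0 < eps -> exists delta, 0 < delta /\
    forall h, vnorm h < delta ->
      vnorm (vsub (vsub (f (vadd x h)) (f x)) (A h)) <= eps * vnorm h.

(** [B] is the Fréchet derivative at [x] of the map [Df : Z -> L(Z,E)]
    (with the operator norm on L(Z,E)). *)
Definition frechet_deriv2 {n m : nat} (Df : Vec n -> Vec n -> Vec m)
    (B : Vec n -> Vec n -> Vec m) (x : Vec n) : Prop :=
  is_bilinear B /\
  forall eps, 0 < eps -> exists delta, 0 < delta /\
    forall h, vnorm h < delta -> forall u,
      vnorm (vsub (vsub (Df (vadd x h) u) (Df x u)) (B h u)) <= eps * vnorm h * vnorm u.

Definition cont_bilin_at {n m : nat} (D2f : Vec n -> Vec n -> Vec n -> Vec m) (x : Vec n) : Prop :=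
  forall eps, 0 < eps -> exists delta, 0 < delta /\
    forall y, vnorm (vsub y x) < delta -> forall h u,
      vnorm (vsub (D2f y h u) (D2f x h u)) <= eps * vnorm h * vnorm u.

Definition C2_around {n m : nat} (G : Vec n -> Vec m) (DG : Vec n -> Vec n -> Vec m)
    (D2G : Vec n -> Vec n -> Vec n -> Vec m) (zbar : Vec n) : Prop :=
  exists r, 0 < r /\ forall z, vnorm (vsub z zbar) < r ->
    frechet_deriv G (DG z) z /\ frechet_deriv2 DG (D2G z) z /\ cont_bilin_at D2G z.

Definition MSCQ {n m : nat} (G : Vec n -> Vec m) (K : Vec m -> Prop) (zbar : Vec n) : Prop :=
  exists kappa', 0 <= kappa' /\ exists delta, 0 < delta /\
    forall z, vnorm (vsub z zbar) < delta ->
      forall d1 d2, is_dist (fun z' => K (G z')) z d1 -> is_dist K (G z) d2 ->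
        d1 <= kappa' * d2.

From Stdlib Require Import Reals Lra Lia FunctionalExtensionality Classical ClassicalEpsilon.
From Stdlib Require Import Rtopology.
From Stdlib Require Vectors.Fin.
Open Scope R_scope.

(* Write A = DG zbar, B = D2G zbar and b = B(v,v)/2.  A tangent direction
   A w + b + q is witnessed by t_k -> 0 and xi_k -> A w + b + q with
   A v + t_k xi_k in K.  By second-order Taylor expansion, the point
   z_k = zbar + t_k v + t_k^2 w satisfies G(z_k) = t_k (A v + t_k xi_k) - t_k^2 q
   + o(t_k^2), so it violates the constraint by about t_k^2 |q|.  MSCQ moves
   z_k to a feasible point zbar + t_k v + t_k^2 w_k with |w_k - w| <= kappa' |q|
   + o(1).  The w_k are bounded, and at a cluster point wt the same expansion,
   now along feasible parabolas, shows that A wt + b is tangent to K at A v. *)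

Lemma fsum_ext n (f g : Fin.t n -> R) : (forall i, f i = g i) -> fsum n f = fsum n g.
Proof.
  revert f g; induction n as [|n IH]; intros f g Hfg; simpl; [reflexivity|].
  rewrite Hfg, (IH (fun i => f (Fin.FS i)) (fun i => g (Fin.FS i))); auto.
Qed.

Lemma fsum_plus n (f g : Fin.t n -> R) :
  fsum n (fun i => f i + g i) = fsum n f + fsum n g.
Proof.
  revert f g; induction n as [|n IH]; intros f g; simpl; [ring|].
  rewrite (IH (fun i => f (Fin.FS i)) (fun i => g (Fin.FS i))); ring.
Qed.

Lemma fsum_scal n c (f : Fin.t n -> R) : fsum n (fun i => c * f i) = c * fsum n f.
Proof.
  revert f; induction n as [|n IH]; intros f; simpl; [ring|].
  rewrite (IH (fun i => f (Fin.FS i))); ring.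
Qed.

Lemma fsum_nonneg n (f : Fin.t n -> R) : (forall i, 0 <= f i) -> 0 <= fsum n f.
Proof.
  revert f; induction n as [|n IH]; intros f Hf; simpl; [lra|].
  specialize (IH (fun i => f (Fin.FS i)) (fun i => Hf (Fin.FS i))).
  specialize (Hf Fin.F1); lra.
Qed.

Lemma fsum_ge_term n (f : Fin.t n -> R) : (forall i, 0 <= f i) -> forall i, f i <= fsum n f.
Proof.
  revert f; induction n as [|n IH]; intros f Hf i; [inversion i|].
  simpl; pattern i; apply Fin.caseS'.
  - pose proof (fsum_nonneg n (fun i => f (Fin.FS i)) (fun i => Hf (Fin.FS i))); lra.
  - intros j; pose proof (Hf Fin.F1).
    pose proof (IH (fun i => f (Fin.FS i)) (fun i => Hf (Fin.FS i)) j); simpl in *; lra.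
Qed.

Lemma fsum_cauchy_schwarz n (x y : Fin.t n -> R) :
  fsum n (fun i => x i * y i) ^ 2
    <= fsum n (fun i => x i * x i) * fsum n (fun i => y i * y i).
Proof.
  revert x y; induction n as [|n IH]; intros x y; simpl; [lra|].
  set (a := x Fin.F1); set (b := y Fin.F1).
  set (S := fsum n (fun i => x (Fin.FS i) * y (Fin.FS i))).
  set (P := fsum n (fun i => x (Fin.FS i) * x (Fin.FS i))).
  set (Q := fsum n (fun i => y (Fin.FS i) * y (Fin.FS i))).
  assert (HS : S ^ 2 <= P * Q) by apply IH.
  assert (HP : 0 <= P) by (apply fsum_nonneg; intros; nra).
  assert (HQ : 0 <= Q) by (apply fsum_nonneg; intros; nra).
  assert (Hform : 2 * a * b * S <= a * a * Q + b * b * P).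
  { destruct (Req_dec Q 0) as [HQ0|HQ0].
    - assert (HS0 : S = 0) by (rewrite HQ0 in HS; nra); rewrite HQ0, HS0; nra.
    - assert (Q * (a * a * Q - 2 * a * b * S + b * b * P)
                = (a * Q - b * S) ^ 2 + b * b * (P * Q - S ^ 2)) by ring.
      assert (0 <= (a * Q - b * S) ^ 2) by apply pow2_ge_0.
      assert (0 <= b * b * (P * Q - S ^ 2)) by (apply Rmult_le_pos; nra).
      assert (0 < Q) by lra. nra. }
  nra.
Qed.

Lemma vec_ext {n} (x y : Vec n) : (forall i, x i = y i) -> x = y.
Proof. intros; apply functional_extensionality; auto. Qed.

Lemma vnorm_nonneg {n} (x : Vec n) : 0 <= vnorm x.
Proof. apply sqrt_pos. Qed.

Lemma vnorm_sq {n} (x : Vec n) : vnorm x ^ 2 = fsum n (fun i => x i * x i).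
Proof. apply pow2_sqrt, fsum_nonneg; intros; nra. Qed.

Lemma vnorm_le {n} (x : Vec n) c :
  0 <= c -> fsum n (fun i => x i * x i) <= c ^ 2 -> vnorm x <= c.
Proof. intros Hc Hx; rewrite <- (sqrt_pow2 c Hc); apply sqrt_le_1_alt, Hx. Qed.

Lemma vnorm_scal {n} a (x : Vec n) : vnorm (vscal a x) = Rabs a * vnorm x.
Proof.
  unfold vnorm, vscal.
  rewrite (fsum_ext n _ (fun i => (a * a) * (x i * x i))) by (intros; ring).
  rewrite fsum_scal, sqrt_mult_alt by apply Rle_0_sqr.
  f_equal; apply sqrt_Rsqr_abs.
Qed.

Lemma vnorm_zero n : vnorm (vzero n) = 0.
Proof.
  replace (vzero n) with (vscal 0 (vzero n))
    by (apply vec_ext; intro; unfold vscal, vzero; ring).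
  rewrite vnorm_scal, Rabs_R0; ring.
Qed.

Lemma vnorm_sub_self {n} (x : Vec n) : vnorm (vsub x x) = 0.
Proof.
  replace (vsub x x) with (vzero n) by (apply vec_ext; intro; unfold vsub, vzero; ring).
  apply vnorm_zero.
Qed.

Lemma vnorm_sub_sym {n} (x y : Vec n) : vnorm (vsub x y) = vnorm (vsub y x).
Proof. unfold vnorm, vsub; f_equal; apply fsum_ext; intros; ring. Qed.

Lemma vnorm_add {n} (x y : Vec n) : vnorm (vadd x y) <= vnorm x + vnorm y.
Proof.
  pose proof (vnorm_nonneg x); pose proof (vnorm_nonneg y).
  apply vnorm_le; [lra|]. unfold vadd.
  rewrite (fsum_ext n _ (fun i => x i * x i + (2 * (x i * y i) + y i * y i)))
    by (intros; ring).
  rewrite !fsum_plus, fsum_scal, <- !vnorm_sq.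
  assert (Hcs : fsum n (fun i => x i * y i) ^ 2 <= (vnorm x * vnorm y) ^ 2).
  { rewrite Rpow_mult_distr, !vnorm_sq; apply fsum_cauchy_schwarz. }
  assert (fsum n (fun i => x i * y i) <= vnorm x * vnorm y).
  { apply Rsqr_incr_0_var; unfold Rsqr; [nra|]. apply Rmult_le_pos; auto. }
  nra.
Qed.

Lemma vnorm_sub_le {n} (x y : Vec n) : vnorm (vsub x y) <= vnorm x + vnorm y.
Proof.
  replace (vsub x y) with (vadd x (vscal (-1) y))
    by (apply vec_ext; intro; unfold vadd, vsub, vscal; ring).
  eapply Rle_trans; [apply vnorm_add|]; rewrite vnorm_scal, Rabs_left; lra.
Qed.

Lemma vnorm_sub_triangle {n} (x y z : Vec n) :
  vnorm (vsub x z) <= vnorm (vsub x y) + vnorm (vsub y z).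
Proof.
  replace (vsub x z) with (vadd (vsub x y) (vsub y z))
    by (apply vec_ext; intro; unfold vadd, vsub; ring).
  apply vnorm_add.
Qed.

Lemma coord_le_vnorm {n} (x : Vec n) i : Rabs (x i) <= vnorm x.
Proof.
  unfold vnorm; rewrite <- sqrt_Rsqr_abs; apply sqrt_le_1_alt.
  apply (fsum_ge_term n (fun i => x i * x i)); intros; apply Rle_0_sqr.
Qed.

Definition vtail {n} (x : Vec (S n)) : Vec n := fun i => x (Fin.FS i).

Lemma vnorm_vtail_le {n} (x : Vec (S n)) : vnorm (vtail x) <= vnorm x.
Proof.
  apply sqrt_le_1_alt; unfold vtail; simpl; pose proof (Rle_0_sqr (x Fin.F1)).
  unfold Rsqr in *; lra.
Qed.

Lemma vnorm_le_head_vtail {n} (x : Vec (S n)) : vnorm x <= Rabs (x Fin.F1) + vnorm (vtail x).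
Proof.
  pose proof (Rabs_pos (x Fin.F1)); pose proof (vnorm_nonneg (vtail x)).
  apply vnorm_le; [lra|]; simpl.
  change (fsum n _) with (fsum n (fun i => vtail x i * vtail x i)).
  rewrite <- vnorm_sq; pose proof (Rsqr_abs (x Fin.F1)); unfold Rsqr in *; nra.
Qed.

Lemma vnorm_le_coord_bound {n} (x : Vec n) c :
  (forall i, Rabs (x i) <= c) -> vnorm x <= INR n * c.
Proof.
  revert x; induction n as [|n IH]; intros x Hx.
  - apply vnorm_le; simpl; lra.
  - eapply Rle_trans; [apply vnorm_le_head_vtail|].
    pose proof (IH (vtail x) (fun i => Hx (Fin.FS i))).
    rewrite S_INR; specialize (Hx Fin.F1); lra.
Qed.

Section LinearMaps.
Variables (n m : nat) (A : Vec n -> Vec m).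
Hypothesis A_linear : is_linear A.

Lemma linear_add x y : A (vadd x y) = vadd (A x) (A y).
Proof.
  pose proof (A_linear x y 1 1) as H.
  replace (vadd (vscal 1 x) (vscal 1 y)) with (vadd x y) in H
    by (apply vec_ext; intro; unfold vadd, vscal; ring).
  rewrite H; apply vec_ext; intro; unfold vadd, vscal; ring.
Qed.

Lemma linear_scal a x : A (vscal a x) = vscal a (A x).
Proof.
  pose proof (A_linear x x a 0) as H.
  replace (vadd (vscal a x) (vscal 0 x)) with (vscal a x) in H
    by (apply vec_ext; intro; unfold vadd, vscal; ring).
  rewrite H; apply vec_ext; intro; unfold vadd, vscal; ring.
Qed.

Lemma linear_sub x y : A (vsub x y) = vsub (A x) (A y).
Proof.
  pose proof (A_linear x y 1 (-1)) as H.
  replace (vadd (vscal 1 x) (vscal (-1) y)) with (vsub x y) in H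
    by (apply vec_ext; intro; unfold vadd, vsub, vscal; ring).
  rewrite H; apply vec_ext; intro; unfold vadd, vsub, vscal; ring.
Qed.

End LinearMaps.

Definition vcons {n} (a : R) (y : Vec n) : Vec (S n) :=
  fun i => Fin.caseS' i (fun _ => R) a y.

Lemma vec_head_vtail {n} (x : Vec (S n)) :
  x = vadd (vscal (x Fin.F1) (vcons 1 (vzero n))) (vcons 0 (vtail x)).
Proof.
  apply vec_ext; intro i; pattern i; apply Fin.caseS';
    unfold vadd, vscal, vcons, vzero, vtail; simpl; intros; ring.
Qed.

Lemma vcons0_linear {n} a b (x y : Vec n) :
  vcons 0 (vadd (vscal a x) (vscal b y)) = vadd (vscal a (vcons 0 x)) (vscal b (vcons 0 y)).
Proof.
  apply vec_ext; intro i; pattern i; apply Fin.caseS';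
    unfold vadd, vscal, vcons; simpl; intros; ring.
Qed.

Lemma vec0_eq_vscal0 (x : Vec 0) : x = vscal 0 x.
Proof. apply vec_ext; intro i; inversion i. Qed.

Lemma linear_bounded n m (A : Vec n -> Vec m) :
  is_linear A -> exists M, 0 <= M /\ forall x, vnorm (A x) <= M * vnorm x.
Proof.
  revert A; induction n as [|n IH]; intros A HA.
  - exists 0; split; [lra|]; intros x.
    rewrite (vec0_eq_vscal0 x), (linear_scal _ _ _ HA), vnorm_scal, Rabs_R0; lra.
  - destruct (IH (fun y => A (vcons 0 y))) as [M [HM HMb]].
    { intros x y a b; rewrite vcons0_linear; apply HA. }
    set (e1 := vcons 1 (vzero n)).
    exists (vnorm (A e1) + M); split; [pose proof (vnorm_nonneg (A e1)); lra|].
    intros x; rewrite (vec_head_vtail x) at 1; fold e1.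
    rewrite (linear_add _ _ _ HA), (linear_scal _ _ _ HA).
    eapply Rle_trans; [apply vnorm_add|]; rewrite vnorm_scal.
    pose proof (HMb (vtail x)); pose proof (coord_le_vnorm x Fin.F1).
    pose proof (vnorm_vtail_le x); pose proof (vnorm_nonneg (A e1)).
    pose proof (Rabs_pos (x Fin.F1)); nra.
Qed.

Lemma bilinear_bounded n p m (B : Vec n -> Vec p -> Vec m) :
  (forall u, is_linear (fun h => B h u)) -> (forall h, is_linear (B h)) ->
  exists M, 0 <= M /\ forall x y, vnorm (B x y) <= M * vnorm x * vnorm y.
Proof.
  revert B; induction n as [|n IH]; intros B HB1 HB2.
  - exists 0; split; [lra|]; intros x y.
    rewrite (vec0_eq_vscal0 x), (linear_scal _ _ _ (HB1 y)), vnorm_scal, Rabs_R0; lra.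
  - destruct (IH (fun x y => B (vcons 0 x) y)) as [M [HM HMb]].
    { intros u x y a b; rewrite vcons0_linear; apply HB1. }
    { intros h; apply HB2. }
    set (e1 := vcons 1 (vzero n)).
    destruct (linear_bounded _ _ _ (HB2 e1)) as [M1 [HM1 HM1b]].
    exists (M1 + M); split; [lra|].
    intros x y; rewrite (vec_head_vtail x) at 1; fold e1.
    rewrite (linear_add _ _ _ (HB1 y)), (linear_scal _ _ _ (HB1 y)).
    eapply Rle_trans; [apply vnorm_add|]; rewrite vnorm_scal.
    pose proof (HMb (vtail x) y); pose proof (HM1b y); pose proof (coord_le_vnorm x Fin.F1).
    pose proof (vnorm_vtail_le x); pose proof (vnorm_nonneg y).
    pose proof (vnorm_nonneg (B e1 y)); pose proof (Rabs_pos (x Fin.F1)).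
    assert (Rabs (x Fin.F1) * vnorm (B e1 y) <= vnorm x * (M1 * vnorm y)).
    { apply Rmult_le_compat; auto. }
    assert (M * vnorm (vtail x) * vnorm y <= M * vnorm x * vnorm y).
    { apply Rmult_le_compat_r; auto; apply Rmult_le_compat_l; auto. }
    nra.
Qed.

Lemma poly2_derivative a d s : derivable_pt_lim (fun s => a * s + d / 2 * s ^ 2) s (a + s * d).
Proof.
  replace (a + s * d) with (a * 1 + d / 2 * (INR 2 * s ^ Nat.pred 2)) by (simpl; field).
  apply (derivable_pt_lim_plus (fun s => a * s) (fun s => d / 2 * s ^ 2)).
  - apply (derivable_pt_lim_scal id), derivable_pt_lim_id.
  - apply (derivable_pt_lim_scal (fun s => s ^ 2)), derivable_pt_lim_pow.
Qed.

Lemma line_coord_derivative {n m} (G : Vec n -> Vec m) (A : Vec n -> Vec m) z h s i :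
  frechet_deriv G A (vadd z (vscal s h)) ->
  derivable_pt_lim (fun u => G (vadd z (vscal u h)) i) s (A h i).
Proof.
  intros [HA HF] eps Heps.
  pose proof (vnorm_nonneg h); set (c := vnorm h + 1).
  assert (Hc : 0 < c) by (unfold c; lra).
  destruct (HF (eps / (2 * c))) as [dF [HdF HdF']]; [apply Rdiv_lt_0_compat; lra|].
  assert (Hdc : 0 < dF / c) by (apply Rdiv_lt_0_compat; lra).
  exists (mkposreal _ Hdc); simpl; intros u Hu0 Hu.
  assert (Hsmall : vnorm (vscal u h) < dF).
  { rewrite vnorm_scal; apply (Rmult_lt_compat_r c) in Hu; [|lra].
    unfold Rdiv in Hu; rewrite Rmult_assoc, Rinv_l, Rmult_1_r in Hu by lra.
    unfold c in Hu; pose proof (Rabs_pos u); nra. }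
  specialize (HdF' _ Hsmall); rewrite (linear_scal _ _ _ HA), vnorm_scal in HdF'.
  replace (vadd z (vscal (s + u) h)) with (vadd (vadd z (vscal s h)) (vscal u h))
    by (apply vec_ext; intro; unfold vadd, vscal; ring).
  set (y := vadd z (vscal s h)) in *.
  assert (Hi : Rabs (G (vadd y (vscal u h)) i - G y i - u * A h i)
                <= eps / (2 * c) * (Rabs u * vnorm h))
    by exact (Rle_trans _ _ _
      (coord_le_vnorm (vsub (vsub (G (vadd y (vscal u h))) (G y)) (vscal u (A h))) i) HdF').
  assert (Hu' : 0 < Rabs u) by (apply Rabs_pos_lt; auto).
  apply (Rmult_lt_reg_r (Rabs u)); [auto|].
  rewrite <- Rabs_mult.
  replace (((G (vadd y (vscal u h)) i - G y i) / u - A h i) * u)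
    with (G (vadd y (vscal u h)) i - G y i - u * A h i) by (field; auto).
  assert (eps / (2 * c) * vnorm h < eps).
  { apply (Rmult_lt_reg_r (2 * c)); [lra|].
    replace (eps / (2 * c) * vnorm h * (2 * c)) with (eps * vnorm h) by (field; lra).
    unfold c; nra. }
  nra.
Qed.

Lemma second_order_mvt (f f' : R -> R) b e :
  (forall s, 0 <= s <= 1 -> derivable_pt_lim f s (f' s)) ->
  (forall s, 0 <= s <= 1 -> Rabs (f' s - f' 0 - s * b) <= e) ->
  Rabs (f 1 - f 0 - (f' 0 + b / 2)) <= e.
Proof.
  intros Hf Hf'.
  destruct (MVT_cor2 (fun s => f s - (f' 0 * s + b / 2 * s ^ 2))
                     (fun s => f' s - (f' 0 + s * b)) 0 1) as [c [Hc Hcin]]; [lra| |].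
  - intros s Hs; apply (derivable_pt_lim_minus f (fun s => f' 0 * s + b / 2 * s ^ 2));
      [apply Hf, Hs| apply poly2_derivative].
  - replace (f 1 - f 0 - (f' 0 + b / 2))
      with (f 1 - (f' 0 * 1 + b / 2 * 1 ^ 2) - (f 0 - (f' 0 * 0 + b / 2 * 0 ^ 2))) by ring.
    rewrite Hc, Rminus_0_r, Rmult_1_r.
    replace (f' c - (f' 0 + c * b)) with (f' c - f' 0 - c * b) by ring.
    apply Hf'; lra.
Qed.

Definition taylor2_remainder {n m} (G : Vec n -> Vec m) (A : Vec n -> Vec m)
    (B : Vec n -> Vec n -> Vec m) (zbar h : Vec n) : Vec m :=
  vsub (vsub (G (vadd zbar h)) (G zbar)) (vadd (A h) (vscal (1/2) (B h h))).

Lemma C2_around_at_center {n m} (G : Vec n -> Vec m) DG D2G zbar :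
  C2_around G DG D2G zbar -> frechet_deriv G (DG zbar) zbar /\ frechet_deriv2 DG (D2G zbar) zbar.
Proof.
  intros [r [Hr HC]]; destruct (HC zbar) as [HD [HD2 _]]; [rewrite vnorm_sub_self; exact Hr|].
  split; assumption.
Qed.

Lemma C2_around_center {n m} (G : Vec n -> Vec m) DG D2G zbar :
  C2_around G DG D2G zbar -> is_linear (DG zbar) /\ is_bilinear (D2G zbar).
Proof. intros HC2; destruct (C2_around_at_center _ _ _ _ HC2) as [[HA _] [HB _]]; auto. Qed.

Lemma taylor2 {n m} (G : Vec n -> Vec m) DG D2G zbar :
  C2_around G DG D2G zbar ->
  forall eps, 0 < eps -> exists delta, 0 < delta /\ forall h, vnorm h < delta ->
    vnorm (taylor2_remainder G (DG zbar) (D2G zbar) zbar h) <= eps * vnorm h ^ 2.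
Proof.
  intros HC2 eps Heps.
  destruct (C2_around_at_center _ _ _ _ HC2) as [_ [[HB1 _] HD2]].
  destruct HC2 as [r [Hr HC]].
  set (e := eps / (INR m + 1)).
  pose proof (pos_INR m).
  assert (He : 0 < e) by (apply Rdiv_lt_0_compat; lra).
  destruct (HD2 e He) as [d [Hd Hd']].
  exists (Rmin r d); split; [apply Rmin_pos; lra|].
  intros h Hh; pose proof (Rmin_l r d); pose proof (Rmin_r r d); pose proof (vnorm_nonneg h).
  assert (Hline : forall s, 0 <= s <= 1 -> vnorm (vscal s h) <= vnorm h).
  { intros s Hs; rewrite vnorm_scal, Rabs_right by lra; nra. }
  assert (Hcoord : forall i,
            Rabs (taylor2_remainder G (DG zbar) (D2G zbar) zbar h i) <= e * vnorm h ^ 2).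
  { intros i.
    pose proof (second_order_mvt (fun s => G (vadd zbar (vscal s h)) i)
                  (fun s => DG (vadd zbar (vscal s h)) h i) (D2G zbar h h i) (e * vnorm h ^ 2))
      as Hmvt; cbv beta in Hmvt.
    replace (vadd zbar (vscal 0 h)) with zbar in Hmvt
      by (apply vec_ext; intro; unfold vadd, vscal; ring).
    replace (vadd zbar (vscal 1 h)) with (vadd zbar h) in Hmvt
      by (apply vec_ext; intro; unfold vadd, vscal; ring).
    unfold taylor2_remainder, vsub, vadd, vscal.
    replace (1 / 2 * D2G zbar h h i) with (D2G zbar h h i / 2) by field.
    apply Hmvt.
    - intros s Hs; apply line_coord_derivative, HC.
      replace (vsub (vadd zbar (vscal s h)) zbar) with (vscal s h)
        by (apply vec_ext; intro; unfold vsub, vadd, vscal; ring).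
      specialize (Hline s Hs); lra.
    - intros s Hs.
      assert (Hs' : vnorm (vscal s h) < d) by (specialize (Hline s Hs); lra).
      specialize (Hd' _ Hs' h); rewrite (linear_scal _ _ _ (HB1 h)) in Hd'.
      eapply Rle_trans; [exact (coord_le_vnorm (vsub (vsub (DG (vadd zbar (vscal s h)) h)
                                   (DG zbar h)) (vscal s (D2G zbar h h))) i)|].
      assert (e * vnorm (vscal s h) * vnorm h <= e * vnorm h ^ 2).
      { specialize (Hline s Hs); replace (vnorm h ^ 2) with (vnorm h * vnorm h) by ring.
        rewrite Rmult_assoc; apply Rmult_le_compat_l; [lra|].
        apply Rmult_le_compat_r; lra. }
      lra. }
  eapply Rle_trans; [apply (vnorm_le_coord_bound _ _ Hcoord)|].
  assert (INR m * e <= eps).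
  { unfold e; apply (Rmult_le_reg_r (INR m + 1)); [lra|].
    replace (INR m * (eps / (INR m + 1)) * (INR m + 1)) with (INR m * eps) by (field; lra).
    nra. }
  assert (0 <= vnorm h ^ 2) by apply pow2_ge_0.
  nra.
Qed.

Definition parabola {n} (T : R) (v u : Vec n) : Vec n := vadd (vscal T v) (vscal (T ^ 2) u).

(* The terms of order <= 2 in T of G(zbar + T v + T^2 u) when G zbar = 0. *)
Definition parabola_model {n m} (A : Vec n -> Vec m) (B : Vec n -> Vec n -> Vec m) T v u :=
  vadd (vscal T (A v)) (vscal (T ^ 2) (vadd (A u) (vscal (1/2) (B v v)))).

Definition parabola_tail {n m} (B : Vec n -> Vec n -> Vec m) T v u :=
  vadd (vscal (T ^ 3 / 2) (vadd (B v u) (B u v))) (vscal (T ^ 4 / 2) (B u u)).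

Lemma vnorm_parabola_le {n} T (v u : Vec n) :
  0 <= T <= 1 -> vnorm (parabola T v u) <= T * (vnorm v + vnorm u).
Proof.
  intros HT; unfold parabola; eapply Rle_trans; [apply vnorm_add|].
  rewrite !vnorm_scal, Rabs_right, Rabs_right by (try apply Rle_ge, pow2_ge_0; lra).
  pose proof (vnorm_nonneg u); assert (T ^ 2 <= T) by nra; nra.
Qed.

Lemma parabola_model_error {n m} (G : Vec n -> Vec m) A B zbar T v u :
  is_linear A -> is_bilinear B -> G zbar = vzero m ->
  vsub (G (vadd zbar (parabola T v u))) (parabola_model A B T v u) =
  vadd (taylor2_remainder G A B zbar (parabola T v u)) (parabola_tail B T v u).
Proof.
  intros HA [HB1 HB2] HG.
  unfold taylor2_remainder, parabola, parabola_model, parabola_tail.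
  rewrite HG, HA, HB1, !HB2.
  apply vec_ext; intro i; unfold vadd, vsub, vscal, vzero; field.
Qed.

Lemma parabola_tail_bound {n m} (B : Vec n -> Vec n -> Vec m) MB T (v u : Vec n) M :
  0 <= MB -> (forall x y, vnorm (B x y) <= MB * vnorm x * vnorm y) ->
  0 <= T <= 1 -> vnorm u <= M ->
  vnorm (parabola_tail B T v u) <= T ^ 3 * (MB * (2 * vnorm v * M + M * M)).
Proof.
  intros HMB HMBb HT Hu.
  pose proof (vnorm_nonneg v); pose proof (vnorm_nonneg u).
  assert (Hvu : vnorm (B v u) <= MB * vnorm v * M).
  { eapply Rle_trans; [apply HMBb|]; apply Rmult_le_compat_l; [nra| lra]. }
  assert (Huv : vnorm (B u v) <= MB * vnorm v * M).
  { eapply Rle_trans; [apply HMBb|].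
    replace (MB * vnorm v * M) with (MB * M * vnorm v) by ring.
    apply Rmult_le_compat_r; [lra|]; apply Rmult_le_compat_l; lra. }
  assert (Huu : vnorm (B u u) <= MB * M * M).
  { eapply Rle_trans; [apply HMBb|]; apply Rmult_le_compat; nra. }
  assert (HT3 : 0 <= T ^ 3) by (apply pow_le; lra).
  assert (HT4 : T ^ 4 <= T ^ 3) by (simpl; nra).
  unfold parabola_tail; eapply Rle_trans; [apply vnorm_add|].
  rewrite !vnorm_scal, !Rabs_right by (apply Rle_ge; apply Rmult_le_pos; [apply pow_le|]; lra).
  pose proof (vnorm_add (B v u) (B u v)); pose proof (vnorm_nonneg (B u u)).
  assert (T ^ 3 / 2 * vnorm (vadd (B v u) (B u v)) <= T ^ 3 * (MB * vnorm v * M))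
    by (unfold Rdiv; nra).
  assert (T ^ 4 / 2 * vnorm (B u u) <= T ^ 3 * (MB * M * M)) by (unfold Rdiv; nra).
  assert (0 <= T ^ 3 * (MB * vnorm v * M))
    by (apply Rmult_le_pos; [lra|]; repeat apply Rmult_le_pos; lra).
  lra.
Qed.

Lemma parabola_expansion {n m} (G : Vec n -> Vec m) DG D2G zbar v M :
  C2_around G DG D2G zbar -> G zbar = vzero m -> 0 <= M ->
  forall eps, 0 < eps -> exists delta, 0 < delta /\ forall T u, 0 < T < delta -> vnorm u <= M ->
    vnorm (vsub (G (vadd zbar (parabola T v u))) (parabola_model (DG zbar) (D2G zbar) T v u))
      <= eps * T ^ 2.
Proof.
  intros HC2 HG HM eps Heps.
  destruct (C2_around_center _ _ _ _ HC2) as [HA [HB1 HB2]].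
  destruct (bilinear_bounded _ _ _ _ HB1 HB2) as [MB [HMB HMBb]].
  set (c := vnorm v + M + 1); pose proof (vnorm_nonneg v).
  assert (Hc : 0 < c) by (unfold c; lra).
  set (Ctail := MB * (2 * vnorm v * M + M * M)).
  assert (HCtail : 0 <= Ctail) by (unfold Ctail; apply Rmult_le_pos; nra).
  set (theta := eps / (2 * c ^ 2)).
  assert (Htheta : 0 < theta) by (unfold theta; apply Rdiv_lt_0_compat; nra).
  destruct (taylor2 G DG D2G zbar HC2 theta Htheta) as [dT [HdT HTay]].
  set (delta := Rmin 1 (Rmin (dT / c) (eps / (2 * (Ctail + 1))))).
  assert (Hdelta1 : delta <= 1) by apply Rmin_l.
  assert (Hdelta2 : delta <= dT / c) by (eapply Rle_trans; [apply Rmin_r| apply Rmin_l]).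
  assert (Hdelta3 : delta <= eps / (2 * (Ctail + 1)))
    by (eapply Rle_trans; [apply Rmin_r| apply Rmin_r]).
  exists delta; split; [repeat apply Rmin_pos; try apply Rdiv_lt_0_compat; lra|].
  intros T u HT Hu; pose proof (vnorm_nonneg u).
  assert (HTc : T * c < dT).
  { apply (Rmult_lt_reg_r (/ c)); [apply Rinv_0_lt_compat; lra|].
    rewrite Rmult_assoc, Rinv_r, Rmult_1_r by lra; fold (dT / c); lra. }
  assert (Hrem : vnorm (taylor2_remainder G (DG zbar) (D2G zbar) zbar (parabola T v u))
                   <= eps / 2 * T ^ 2).
  { assert (Hh : vnorm (parabola T v u) <= T * c).
    { eapply Rle_trans; [apply vnorm_parabola_le; lra|]; unfold c; nra. }
    eapply Rle_trans; [apply HTay; lra|].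
    assert (vnorm (parabola T v u) ^ 2 <= (T * c) ^ 2)
      by (apply pow_incr; split; [apply vnorm_nonneg| exact Hh]).
    replace (eps / 2 * T ^ 2) with (theta * (T * c) ^ 2) by (unfold theta; field; lra).
    apply Rmult_le_compat_l; lra. }
  assert (Htail : vnorm (parabola_tail (D2G zbar) T v u) <= eps / 2 * T ^ 2).
  { eapply Rle_trans; [apply (parabola_tail_bound _ MB T v u M HMB HMBb); lra|]; fold Ctail.
    assert (T * Ctail <= eps / 2).
    { assert (T * Ctail <= eps / (2 * (Ctail + 1)) * (Ctail + 1)) by nra.
      replace (eps / (2 * (Ctail + 1)) * (Ctail + 1)) with (eps / 2) in H1 by (field; lra).
      exact H1. }
    replace (T ^ 3 * Ctail) with (T ^ 2 * (T * Ctail)) by ring.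
    replace (eps / 2 * T ^ 2) with (T ^ 2 * (eps / 2)) by ring.
    apply Rmult_le_compat_l; [apply pow2_ge_0| lra]. }
  rewrite (parabola_model_error G _ _ zbar T v u HA (conj HB1 HB2) HG).
  eapply Rle_trans; [apply vnorm_add|]; lra.
Qed.

Definition vec_cv {n} (u : nat -> Vec n) (l : Vec n) : Prop :=
  forall eps, 0 < eps -> exists N, forall k, (k >= N)%nat -> vnorm (vsub (u k) l) < eps.

Definition strictly_increasing (phi : nat -> nat) : Prop := forall k, (phi k < phi (S k))%nat.

Lemma strictly_increasing_ge phi : strictly_increasing phi -> forall k, (k <= phi k)%nat.
Proof. intros H k; induction k as [|k IH]; [lia|]; specialize (H k); lia. Qed.

Lemma strictly_increasing_lt phi : strictly_increasing phi ->
  forall a b, (a < b)%nat -> (phi a < phi b)%nat.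
Proof. intros H a b Hab; induction Hab as [|b _ IH]; [apply H|]; specialize (H b); lia. Qed.

Lemma real_bounded_subseq_cv (u : nat -> R) M : (forall k, Rabs (u k) <= M) ->
  exists phi l, strictly_increasing phi /\ Un_cv (fun k => u (phi k)) l.
Proof.
  intros HM.
  destruct (Bolzano_Weierstrass u (fun c => -M <= c <= M) (compact_P3 (-M) M)) as [l Hl].
  { intros k; specialize (HM k); pose proof (Rle_abs (u k)); pose proof (Rle_abs (- u k)).
    rewrite Rabs_Ropp in *; lra. }
  assert (Hnear : forall N k, exists p, (N <= p)%nat /\ Rabs (u p - l) < / (INR k + 1)).
  { intros N k.
    assert (Hk : 0 < / (INR k + 1)) by (apply Rinv_0_lt_compat; pose proof (pos_INR k); lra).
    destruct (Hl (fun y => Rabs (y - l) < / (INR k + 1)) N) as [p Hp]; [|exists p; exact Hp].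
    exists (mkposreal _ Hk); intros y Hy; exact Hy. }
  destruct (choice (fun (Nk : nat * nat) p =>
              (fst Nk <= p)%nat /\ Rabs (u p - l) < / (INR (snd Nk) + 1))) as [f Hf];
    [intros [N k]; apply Hnear|].
  set (phi := fix phi k := match k with O => f (O, O) | S k' => f (S (phi k'), S k') end).
  assert (Hphi : forall k, Rabs (u (phi k) - l) < / (INR k + 1)) by (intros [|k]; apply Hf).
  exists phi, l; split.
  - intros k; simpl; destruct (Hf (S (phi k), S k)); simpl in *; lia.
  - intros eps Heps; destruct (archimed_cor1 eps Heps) as [N [HN HN0]].
    exists N; intros k Hk; unfold R_dist; eapply Rlt_trans; [apply Hphi|].
    eapply Rle_lt_trans; [|exact HN].
    apply Rinv_le_contravar; [apply lt_0_INR; lia|].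
    apply le_INR in Hk; lra.
Qed.

Lemma vec_bounded_subseq_cv n (u : nat -> Vec n) M : (forall k, vnorm (u k) <= M) ->
  exists phi l, strictly_increasing phi /\ vec_cv (fun k => u (phi k)) l.
Proof.
  revert u; induction n as [|n IH]; intros u HM.
  - exists (fun k => k), (vzero 0); split; [intros k; lia|].
    intros eps Heps; exists O; intros k _.
    replace (vsub (u k) (vzero 0)) with (vzero 0) by (apply vec_ext; intro i; inversion i).
    rewrite vnorm_zero; exact Heps.
  - destruct (real_bounded_subseq_cv (fun k => u k Fin.F1) M) as [phi1 [l1 [Hphi1 Hcv1]]].
    { intros k; eapply Rle_trans; [apply coord_le_vnorm| apply HM]. }
    destruct (IH (fun k => vtail (u (phi1 k)))) as [phi2 [l2 [Hphi2 Hcv2]]].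
    { intros k; eapply Rle_trans; [apply vnorm_vtail_le| apply HM]. }
    exists (fun k => phi1 (phi2 k)), (vcons l1 l2); split.
    + intros k; apply strictly_increasing_lt; auto.
    + intros eps Heps.
      destruct (Hcv1 (eps / 2)) as [N1 HN1]; [lra|].
      destruct (Hcv2 (eps / 2)) as [N2 HN2]; [lra|].
      exists (Nat.max N1 N2); intros k Hk.
      pose proof (strictly_increasing_ge phi2 Hphi2 k).
      specialize (HN1 (phi2 k) ltac:(lia)); specialize (HN2 k ltac:(lia)).
      unfold R_dist in HN1.
      eapply Rle_lt_trans; [apply vnorm_le_head_vtail|].
      change (vtail (vsub (u (phi1 (phi2 k))) (vcons l1 l2)))
        with (vsub (vtail (u (phi1 (phi2 k)))) l2).
      change (vsub (u (phi1 (phi2 k))) (vcons l1 l2) Fin.F1) with (u (phi1 (phi2 k)) Fin.F1 - l1).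
      lra.
Qed.

Lemma glb_exists (S : R -> Prop) :
  (exists r, S r) -> (forall r, S r -> 0 <= r) -> exists d, is_glb S d.
Proof.
  intros [r0 Hr0] Hpos.
  destruct (completeness (fun x => S (- x))) as [l [Hub Hleast]].
  - exists 0; intros x Hx; specialize (Hpos _ Hx); lra.
  - exists (- r0); rewrite Ropp_involutive; exact Hr0.
  - exists (- l); split.
    + intros r Hr; assert (- r <= l) by (apply Hub; rewrite Ropp_involutive; exact Hr); lra.
    + intros b Hb; assert (l <= - b) by (apply Hleast; intros x Hx; specialize (Hb _ Hx); lra).
      lra.
Qed.

Lemma glb_approx (S : R -> Prop) d eta : is_glb S d -> 0 < eta -> exists r, S r /\ r < d + eta.
Proof.
  intros [_ Hgreatest] Heta; apply NNPP; intros Hnone.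
  assert (d + eta <= d); [|lra].
  apply Hgreatest; intros r Hr; apply Rnot_lt_le; intros Hlt; apply Hnone; exists r; auto.
Qed.

Lemma dist_exists {n} (S : Vec n -> Prop) x : (exists s, S s) -> exists d, is_dist S x d.
Proof.
  intros [s Hs]; apply glb_exists.
  - exists (vnorm (vsub x s)), s; auto.
  - intros r [s' [_ ->]]; apply vnorm_nonneg.
Qed.

Definition metric_subregularity_bound {n m} (G : Vec n -> Vec m) (K : Vec m -> Prop) zbar
    kappa' delta : Prop :=
  forall z y eta, vnorm (vsub z zbar) < delta -> K y -> 0 < eta ->
    exists z', K (G z') /\ vnorm (vsub z z') <= kappa' * vnorm (vsub (G z) y) + eta.

Lemma MSCQ_subregularity_bound {n m} (G : Vec n -> Vec m) K zbar :
  MSCQ G K zbar -> K (G zbar) ->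
  exists kappa', 0 <= kappa' /\ exists delta, 0 < delta /\
    metric_subregularity_bound G K zbar kappa' delta.
Proof.
  intros [kp [Hkp [delta [Hdelta HMS]]]] HKzbar.
  exists kp; split; [exact Hkp|]; exists delta; split; [exact Hdelta|].
  intros z y eta Hz Hy Heta.
  destruct (dist_exists (fun z' => K (G z')) z) as [d1 Hd1]; [exists zbar; exact HKzbar|].
  destruct (dist_exists K (G z)) as [d2 Hd2]; [exists y; exact Hy|].
  pose proof (HMS z Hz d1 d2 Hd1 Hd2) as Hd12.
  assert (Hd2y : d2 <= vnorm (vsub (G z) y)) by (apply (proj1 Hd2); exists y; auto).
  destruct (glb_approx _ _ eta Hd1 Heta) as [r [[z' [Hz' ->]] Hr]].
  exists z'; split; [exact Hz'|].
  assert (kp * d2 <= kp * vnorm (vsub (G z) y)) by (apply Rmult_le_compat_l; auto).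
  lra.
Qed.

Lemma subregularity_feasible_sequence {n m} (G : Vec n -> Vec m) K zbar kappa' delta
    (z : nat -> Vec n) (y : nat -> Vec m) (eta : nat -> R) :
  K (G zbar) -> metric_subregularity_bound G K zbar kappa' delta ->
  (forall k, K (y k)) -> (forall k, 0 < eta k) ->
  exists zp : nat -> Vec n, forall k, K (G (zp k)) /\
    (vnorm (vsub (z k) zbar) < delta ->
       vnorm (vsub (z k) (zp k)) <= kappa' * vnorm (vsub (G (z k)) (y k)) + eta k).
Proof.
  intros HKzbar Hsub Hy Heta.
  apply (choice (fun k z' => K (G z') /\ (vnorm (vsub (z k) zbar) < delta ->
    vnorm (vsub (z k) z') <= kappa' * vnorm (vsub (G (z k)) (y k)) + eta k))); intros k.
  destruct (Rlt_dec (vnorm (vsub (z k) zbar)) delta) as [Hnear|Hfar].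
  - destruct (Hsub (z k) (y k) (eta k) Hnear (Hy k) (Heta k)) as [z' Hz']; exists z'; tauto.
  (* far from zbar the estimate is void and any feasible point will do *)
  - exists zbar; split; [exact HKzbar| tauto].
Qed.

Lemma Un_cv_0_eventually_lt (t : nat -> R) tau :
  (forall k, 0 < t k) -> Un_cv t 0 -> 0 < tau -> exists N, forall k, (k >= N)%nat -> t k < tau.
Proof.
  intros Hpos Hcv Htau; destruct (Hcv tau Htau) as [N HN]; exists N; intros k Hk.
  specialize (HN k Hk); specialize (Hpos k); unfold R_dist in HN.
  rewrite Rminus_0_r, Rabs_right in HN by lra; exact HN.
Qed.

Lemma Un_cv_subseq (t : nat -> R) l psi :
  Un_cv t l -> (forall j, (j <= psi j)%nat) -> Un_cv (fun j => t (psi j)) l.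
Proof.
  intros Hcv Hpsi eps Heps; destruct (Hcv eps Heps) as [N HN].
  exists N; intros j Hj; apply HN; specialize (Hpsi j); lia.
Qed.

Lemma vec_cv_eventually_bounded {n} (u : nat -> Vec n) l :
  vec_cv u l -> exists N, forall k, (k >= N)%nat -> vnorm (u k) <= vnorm l + 1.
Proof.
  intros Hcv; destruct (Hcv 1 Rlt_0_1) as [N HN]; exists N; intros k Hk.
  specialize (HN k Hk).
  replace (u k) with (vadd (vsub (u k) l) l) by (apply vec_ext; intro; unfold vadd, vsub; ring).
  pose proof (vnorm_add (vsub (u k) l) l); lra.
Qed.

Section SecondOrderTangents.
Variables (n m : nat) (K : Vec m -> Prop) (G : Vec n -> Vec m)
  (DG : Vec n -> Vec n -> Vec m) (D2G : Vec n -> Vec n -> Vec n -> Vec m) (zbar : Vec n).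
Hypothesis K_cone : cone_set K.
Hypothesis G_C2 : C2_around G DG D2G zbar.
Hypothesis G_zbar : G zbar = vzero m.

Let A := DG zbar.
Let B := D2G zbar.

Lemma tangent_of_feasible_parabolas v (t : nat -> R) (u : nat -> Vec n) wt :
  (forall k, 0 < t k) -> Un_cv t 0 -> vec_cv u wt ->
  (forall k, K (G (vadd zbar (parabola (t k) v (u k))))) ->
  tangent_cone K (A v) (vadd (A wt) (vscal (1/2) (B v v))).
Proof.
  intros Ht Htcv Hucv HK.
  set (W := fun k => vscal (/ t k ^ 2) (vsub (G (vadd zbar (parabola (t k) v (u k))))
                                             (vscal (t k) (A v)))).
  exists t, W; split; [exact Ht|]; split; [exact Htcv|]; split.
  - intros eps Heps.
    destruct (C2_around_center _ _ _ _ G_C2) as [HA _]; fold A in HA.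
    destruct (linear_bounded _ _ _ HA) as [MA [HMA HMAb]].
    destruct (vec_cv_eventually_bounded u wt Hucv) as [N0 HN0].
    destruct (parabola_expansion G DG D2G zbar v (vnorm wt + 1) G_C2 G_zbar
                (Rplus_le_le_0_compat _ _ (vnorm_nonneg wt) Rle_0_1) (eps / 2))
      as [delta [Hdelta Hexp]]; [lra|].
    destruct (Un_cv_0_eventually_lt t delta Ht Htcv Hdelta) as [N1 HN1].
    destruct (Hucv (eps / (2 * (MA + 1)))) as [N2 HN2]; [apply Rdiv_lt_0_compat; lra|].
    exists (Nat.max N0 (Nat.max N1 N2)); intros k Hk.
    specialize (HN0 k ltac:(lia)); specialize (HN1 k ltac:(lia)); specialize (HN2 k ltac:(lia)).
    specialize (Ht k); set (T := t k) in *.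
    set (g := G (vadd zbar (parabola T v (u k)))).
    assert (Hsplit : vsub (W k) (vadd (A wt) (vscal (1/2) (B v v)))
      = vadd (vscal (/ T ^ 2) (vsub g (parabola_model A B T v (u k)))) (A (vsub (u k) wt))).
    { unfold W; fold T g; rewrite (linear_sub _ _ _ HA).
      apply vec_ext; intro i; unfold parabola_model, vadd, vsub, vscal; field; lra. }
    assert (HT2 : 0 < T ^ 2) by (apply pow_lt; lra).
    assert (Hmodel : / T ^ 2 * vnorm (vsub g (parabola_model A B T v (u k))) <= eps / 2).
    { apply (Rmult_le_reg_l (T ^ 2)); [exact HT2|].
      rewrite <- Rmult_assoc, Rinv_r, Rmult_1_l by lra.
      replace (T ^ 2 * (eps / 2)) with (eps / 2 * T ^ 2) by ring; apply Hexp; lra. }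
    assert (Hlin : vnorm (A (vsub (u k) wt)) < eps / 2).
    { eapply Rle_lt_trans; [apply HMAb|].
      apply Rle_lt_trans with (MA * (eps / (2 * (MA + 1)))); [apply Rmult_le_compat_l; lra|].
      apply (Rmult_lt_reg_r (2 * (MA + 1))); [lra|].
      replace (MA * (eps / (2 * (MA + 1))) * (2 * (MA + 1))) with (MA * eps) by (field; lra).
      nra. }
    rewrite Hsplit; eapply Rle_lt_trans; [apply vnorm_add|].
    rewrite vnorm_scal, Rabs_right by (apply Rle_ge, Rlt_le, Rinv_0_lt_compat, HT2); lra.
  - intros k; replace (vadd (A v) (vscal (t k) (W k)))
      with (vscal (/ t k) (G (vadd zbar (parabola (t k) v (u k))))).
    + apply K_cone; [apply HK| left; apply Rinv_0_lt_compat, Ht].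
    + specialize (Ht k); apply vec_ext; intro i; unfold W, vadd, vscal, vsub; field; lra.
Qed.

Lemma parabola_defect_eventually v w q (t : nat -> R) xi :
  (forall k, 0 < t k) -> Un_cv t 0 ->
  vec_cv xi (vadd (vadd (A w) (vscal (1/2) (B v v))) q) ->
  forall eps, 0 < eps -> exists N, forall k, (k >= N)%nat ->
    vnorm (vsub (G (vadd zbar (parabola (t k) v w)))
                (vscal (t k) (vadd (A v) (vscal (t k) (xi k))))) <= t k ^ 2 * (vnorm q + eps).
Proof.
  intros Ht Htcv Hxi eps Heps.
  set (X := vadd (vadd (A w) (vscal (1/2) (B v v))) q) in *.
  destruct (parabola_expansion G DG D2G zbar v (vnorm w) G_C2 G_zbar (vnorm_nonneg w) (eps / 2))
    as [delta [Hdelta Hexp]]; [lra|].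
  destruct (Un_cv_0_eventually_lt t delta Ht Htcv Hdelta) as [N1 HN1].
  destruct (Hxi (eps / 2)) as [N2 HN2]; [lra|].
  exists (Nat.max N1 N2); intros k Hk.
  specialize (HN1 k ltac:(lia)); specialize (HN2 k ltac:(lia)).
  specialize (Ht k); set (T := t k) in *.
  set (g := G (vadd zbar (parabola T v w))).
  replace (vsub g (vscal T (vadd (A v) (vscal T (xi k)))))
    with (vadd (vsub g (parabola_model A B T v w)) (vscal (T ^ 2) (vsub (vsub X (xi k)) q)))
    by (apply vec_ext; intro; unfold X, parabola_model, vadd, vsub, vscal; ring).
  eapply Rle_trans; [apply vnorm_add|].
  rewrite vnorm_scal, Rabs_right by (apply Rle_ge, pow2_ge_0).
  assert (HT2 : 0 <= T ^ 2) by apply pow2_ge_0.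
  assert (vnorm (vsub g (parabola_model A B T v w)) <= eps / 2 * T ^ 2) by (apply Hexp; lra).
  assert (vnorm (vsub (vsub X (xi k)) q) <= eps / 2 + vnorm q).
  { pose proof (vnorm_sub_le (vsub X (xi k)) q) as Hq; rewrite (vnorm_sub_sym X) in Hq; lra. }
  assert (T ^ 2 * vnorm (vsub (vsub X (xi k)) q) <= T ^ 2 * (eps / 2 + vnorm q))
    by (apply Rmult_le_compat_l; lra).
  nra.
Qed.

Lemma feasible_parabolas_near v w q (t : nat -> R) xi kappa' delta :
  K (G zbar) -> 0 <= kappa' -> 0 < delta -> metric_subregularity_bound G K zbar kappa' delta ->
  (forall k, 0 < t k) -> Un_cv t 0 ->
  vec_cv xi (vadd (vadd (A w) (vscal (1/2) (B v v))) q) ->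
  (forall k, K (vadd (A v) (vscal (t k) (xi k)))) ->
  exists u : nat -> Vec n, (forall k, K (G (vadd zbar (parabola (t k) v (u k))))) /\
    forall eps, 0 < eps -> exists N, forall k, (k >= N)%nat ->
      vnorm (vsub (u k) w) <= kappa' * vnorm q + eps.
Proof.
  intros HKzbar Hkp Hdelta Hsub Ht Htcv Hxi HK.
  set (z := fun k => vadd zbar (parabola (t k) v w)).
  set (y := fun k => vscal (t k) (vadd (A v) (vscal (t k) (xi k)))).
  destruct (subregularity_feasible_sequence G K zbar kappa' delta z y (fun k => t k ^ 3)
              HKzbar Hsub) as [zp Hzp];
    [intros k; apply K_cone; [apply HK| left; apply Ht]| intros k; apply pow_lt, Ht|].
  exists (fun k => vscal (/ t k ^ 2) (vsub (vsub (zp k) zbar) (vscal (t k) v))); split.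
  - intros k; specialize (Ht k); replace (vadd zbar (parabola (t k) v _)) with (zp k);
      [apply Hzp| apply vec_ext; intro; unfold parabola, vadd, vsub, vscal; field; lra].
  - intros eps Heps.
    set (eps' := eps / (2 * (kappa' + 1))).
    assert (Heps' : 0 < eps') by (unfold eps'; apply Rdiv_lt_0_compat; lra).
    assert (Hkeps : kappa' * eps' <= eps / 2).
    { unfold eps'; apply (Rmult_le_reg_r (2 * (kappa' + 1))); [lra|].
      replace (kappa' * (eps / (2 * (kappa' + 1))) * (2 * (kappa' + 1))) with (kappa' * eps)
        by (field; lra); nra. }
    set (c := vnorm v + vnorm w + 1); pose proof (vnorm_nonneg v); pose proof (vnorm_nonneg w).
    destruct (parabola_defect_eventually v w q t xi Ht Htcv Hxi eps' Heps') as [N1 HN1].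
    destruct (Un_cv_0_eventually_lt t 1 Ht Htcv Rlt_0_1) as [N2 HN2].
    destruct (Un_cv_0_eventually_lt t (delta / c) Ht Htcv) as [N3 HN3];
      [apply Rdiv_lt_0_compat; unfold c; lra|].
    destruct (Un_cv_0_eventually_lt t (eps / 2) Ht Htcv) as [N4 HN4]; [lra|].
    exists (Nat.max (Nat.max N1 N2) (Nat.max N3 N4)); intros k Hk.
    specialize (HN1 k ltac:(lia)); specialize (HN2 k ltac:(lia)).
    specialize (HN3 k ltac:(lia)); specialize (HN4 k ltac:(lia)).
    specialize (Ht k); set (T := t k) in *.
    assert (Hnear : vnorm (vsub (z k) zbar) < delta).
    { replace (vsub (z k) zbar) with (parabola T v w)
        by (apply vec_ext; intro; unfold z, parabola, vadd, vsub, vscal; fold T; ring).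
      eapply Rle_lt_trans; [apply vnorm_parabola_le; lra|].
      apply (Rmult_lt_compat_r c) in HN3; [|unfold c; lra].
      unfold Rdiv in HN3; rewrite Rmult_assoc, Rinv_l, Rmult_1_r in HN3 by (unfold c; lra).
      unfold c in HN3; lra. }
    specialize (proj2 (Hzp k) Hnear); fold T; intros Hzk.
    assert (HT2 : 0 < T ^ 2) by (apply pow_lt; lra).
    replace (vsub (vscal (/ T ^ 2) (vsub (vsub (zp k) zbar) (vscal T v))) w)
      with (vscal (/ T ^ 2) (vsub (zp k) (z k)))
      by (apply vec_ext; intro; unfold z, parabola, vadd, vsub, vscal; fold T; field; lra).
    rewrite vnorm_scal, Rabs_right, vnorm_sub_sym by (apply Rle_ge, Rlt_le, Rinv_0_lt_compat, HT2).
    apply (Rmult_le_reg_l (T ^ 2)); [exact HT2|].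
    rewrite <- Rmult_assoc, Rinv_r, Rmult_1_l by lra.
    assert (kappa' * vnorm (vsub (G (z k)) (y k)) <= kappa' * (T ^ 2 * (vnorm q + eps')))
      by (apply Rmult_le_compat_l; [exact Hkp| exact HN1]).
    assert (T ^ 3 <= T ^ 2 * (eps / 2)) by (replace (T ^ 3) with (T ^ 2 * T) by ring; nra).
    assert (T ^ 2 * (kappa' * eps') <= T ^ 2 * (eps / 2)) by (apply Rmult_le_compat_l; lra).
    nra.
Qed.

Lemma tangent_of_approx_feasible_parabolas v w (q : Vec m) (t : nat -> R) (u : nat -> Vec n) kappa' :
  (forall k, 0 < t k) -> Un_cv t 0 ->
  (forall k, K (G (vadd zbar (parabola (t k) v (u k))))) ->
  (forall eps, 0 < eps -> exists N, forall k, (k >= N)%nat ->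
     vnorm (vsub (u k) w) <= kappa' * vnorm q + eps) ->
  exists wt, tangent_cone K (A v) (vadd (A wt) (vscal (1/2) (B v v))) /\
    vnorm (vsub wt w) <= kappa' * vnorm q.
Proof.
  intros Ht Htcv HK Hclose.
  destruct (Hclose 1 Rlt_0_1) as [N0 HN0].
  destruct (vec_bounded_subseq_cv n (fun j => u (N0 + j)%nat) (vnorm w + (kappa' * vnorm q + 1)))
    as [phi [wt [Hphi Hcv]]].
  { intros j; specialize (HN0 (N0 + j)%nat ltac:(lia)).
    replace (u (N0 + j)%nat) with (vadd (vsub (u (N0 + j)%nat) w) w)
      by (apply vec_ext; intro; unfold vadd, vsub; ring).
    pose proof (vnorm_add (vsub (u (N0 + j)%nat) w) w); lra. }
  set (psi := fun j => (N0 + phi j)%nat).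
  assert (Hpsi : forall j, (j <= psi j)%nat)
    by (intros j; pose proof (strictly_increasing_ge phi Hphi j); unfold psi; lia).
  exists wt; split.
  - apply (tangent_of_feasible_parabolas v (fun j => t (psi j)) (fun j => u (psi j)));
      [intros; apply Ht| apply Un_cv_subseq; auto| exact Hcv| intros; apply HK].
  - apply Rle_plus_epsilon; intros eps Heps.
    destruct (Hclose (eps / 2)) as [N1 HN1]; [lra|].
    destruct (Hcv (eps / 2)) as [N2 HN2]; [lra|].
    set (j := Nat.max N1 N2).
    specialize (HN1 (psi j) ltac:(specialize (Hpsi j); lia)); specialize (HN2 j ltac:(lia)).
    pose proof (vnorm_sub_triangle wt (u (psi j)) w).
    rewrite vnorm_sub_sym in HN2; simpl in HN2; fold (psi j) in HN2; lra.
Qed.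

End SecondOrderTangents.

Theorem proposition3p1 (n m : nat) (K : Vec m -> Prop) (G : Vec n -> Vec m)
  (DG : Vec n -> Vec n -> Vec m) (D2G : Vec n -> Vec n -> Vec n -> Vec m)
  (zbar : Vec n) :
  closed_convex_cone K ->
  C2_around G DG D2G zbar ->
  G zbar = vzero m ->
  MSCQ G K zbar ->
  forall v : Vec n, K (DG zbar v) ->
  exists kappa, 0 < kappa /\
    forall (w : Vec n) (q : Vec m),
      tangent_cone K (DG zbar v)
        (vadd (vadd (DG zbar w) (vscal (1/2) (D2G zbar v v))) q) ->
      exists wt : Vec n,
        tangent_cone K (DG zbar v) (vadd (DG zbar wt) (vscal (1/2) (D2G zbar v v))) /\
        vnorm (vsub wt w) <= kappa * vnorm q.
Proof.
  intros [_ [_ HKcone]] HC2 HG0 HMS v Hv.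
  assert (HKzbar : K (G zbar)).
  { rewrite HG0; replace (vzero m) with (vscal 0 (DG zbar v))
      by (apply vec_ext; intro; unfold vscal, vzero; ring).
    apply HKcone; [exact Hv| lra]. }
  destruct (MSCQ_subregularity_bound G K zbar HMS HKzbar) as [kp [Hkp [dM [HdM Hproj]]]].
  exists (kp + 1); split; [lra|].
  intros w q [t [xi [Ht [Htcv [Hxi HK]]]]].
  destruct (feasible_parabolas_near n m K G DG D2G zbar HKcone HC2 HG0 v w q t xi kp dM
              HKzbar Hkp HdM Hproj Ht Htcv Hxi HK) as [u [Hu Hclose]].
  destruct (tangent_of_approx_feasible_parabolas n m K G DG D2G zbar HKcone HC2 HG0
              v w q t u kp Ht Htcv Hu Hclose) as [wt [Htan Hwt]].
  exists wt; split; [exact Htan|].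
  pose proof (vnorm_nonneg q); lra.
Qed.
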